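(* Let $G$ be a finite connected multigraph (loops and multiple edges allowed), and let $P\in\mathrm{Aut}(G)$. Then $\Theta_K(P)=\Theta_S(P)$, i.e. $$\operatorname{sign}(|P_E|)\cdot \operatorname{sign}\big(\det[P_E, H_1(G,\mathbb R)]\big)\;=\;\operatorname{sign}(P_V)\cdot\prod_{e\in E}\epsilon_P(e).$$
   Context: A finite multigraph $G$ is given by a finite vertex set $V$, a finite set $H$ of half-edges, a map $v:H\to V$ (the vertex to which a half-edge is attached), and a fixed-point-free involution $\iota$ of $H$; the edges are the $\iota$-orbits $\{h,\iota h\}$, and $E$ denotes the set of edges (an edge with $v(h)=v(\iota h)$ is a loop). An automorphism $P$ of $G$ is a pair of bijections $P_V:V\to V$, $P_H:H\to H$ with $v\circ P_H=P_V\circ v$ and $P_H\circ\iota=\iota\circ P_H$; it induces a permutation $|P_E|$ of $E$. Fix an orientation of each edge, i.e. a choice of one of its two half-edges as its ''tail'' half-edge $t(e)$. Define $\epsilon_P(e)=1$ if $P_H(t(e))=t(|P_E|(e))$ and $\epsilon_P(e)=-1$ otherwise. Let $C_1(G,\mathbb R)$ be the real vector space with basis $E$ and $C_0(G,\mathbb R)$ the one with basis $V$, with boundary map $\partial(e)=v(\iota t(e))-v(t(e))$ (so loops have boundary $0$); $H_1(G,\mathbb R)=\ker\partial$ is the first homology group of $G$. The linear map $P_E:C_1(G,\mathbb R)\to C_1(G,\mathbb R)$, $e\mapsto\epsilon_P(e)\,|P_E|(e)$, commutes with $\partial$ (where $P_V$ acts linearly on $C_0$), hence restricts to an invertible linear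 map of $H_1(G,\mathbb R)$, whose determinant is denoted $\det[P_E,H_1(G,\mathbb R)]$. Kontsevich's orientation homomorphism is $\Theta_K(P)=\operatorname{sign}(|P_E|)\cdot\operatorname{sign}(\det[P_E,H_1(G,\mathbb R)])$; Shoikhet's orientation homomorphism is $\Theta_S(P)=\operatorname{sign}(P_V)\cdot\prod_{e\in E}\epsilon_P(e)$ (independent of the chosen orientations). Here $\operatorname{sign}$ of a permutation is its signature. *)

From HB Require Import structures.
From mathcomp Require Import all_boot all_order all_algebra all_fingroup.
Set Implicit Arguments. Unset Strict Implicit. Unset Printing Implicit Defensive.
Import Order.TTheory GRing.Theory Num.Theory.
Local Open Scope ring_scope.

(* A finite multigraph: vertex set V, half-edge set H, attachment map
   v : H -> V and a fixed-point-free involution iota of H.  The edges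
   (iota-orbits) together with a chosen orientation are encoded by a finite
   type E and a tail map t : E -> H such that every half-edge is, in exactly
   one way, either t e or iota (t e): this is the bijectivity of
   (e, b) |-> if b then t e else iota (t e). *)

Section MG.
Variables (V H E : finType) (v : H -> V) (iota : H -> H) (t : E -> H).

Definition mg_adj : rel V :=
  fun x y => [exists h, (v h == x) && (v (iota h) == y)].

Definition mg_connected : Prop := forall x y : V, connect mg_adj x y.

Definition eps (PH : {perm H}) (PE : {perm E}) (e : E) (R : nzRingType) : R :=
  if PH (t e) == t (PE e) then 1 else -1.

Variable R : realFieldType.

(* Boundary map C_1 -> C_0 as a matrix acting on row vectors (chains),
   rows indexed by edges, columns by vertices (via enum_val):
   d(e) = v(iota t e) - v(t e). *)
Definition bdry_mx : 'M[R]_(#|E|, #|V|) :=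
  \matrix_(i, j) ((v (iota (t (enum_val i))) == enum_val j)%:R
                  - (v (t (enum_val i)) == enum_val j)%:R).

Definition PE_mx (PH : {perm H}) (PE : {perm E}) : 'M[R]_#|E| :=
  \matrix_(i, j) (eps PH PE (enum_val i) R * (PE (enum_val i) == enum_val j)%:R).

(* A basis of H_1 = ker d (row space of B = row_base (kermx d)). *)
Definition H1_basis := row_base (kermx bdry_mx).

Definition PE_on_H1 (PH : {perm H}) (PE : {perm E}) :=
  H1_basis *m PE_mx PH PE *m pinvmx H1_basis.

Definition det_PE_H1 (PH : {perm H}) (PE : {perm E}) : R :=
  \det (PE_on_H1 PH PE).

Definition perm_sign (T : finType) (s : {perm T}) : R := (-1) ^+ odd_perm s.

Definition Theta_K (PH : {perm H}) (PE : {perm E}) : R :=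
  perm_sign PE * Num.sg (det_PE_H1 PH PE).

Definition Theta_S (PV : {perm V}) (PH : {perm H}) (PE : {perm E}) : R :=
  perm_sign PV * \prod_(e : E) eps PH PE e R.

End MG.

From HB Require Import structures.
From mathcomp Require Import all_boot all_order all_algebra all_fingroup.
Import Order.TTheory GRing.Theory Num.Theory.
Local Open Scope ring_scope.
Set Implicit Arguments. Unset Strict Implicit. Unset Printing Implicit Defensive.

(* P_E is a chain map: P_E d = d P_V.  Hence the determinant of P_E on C_1 is
   its determinant on H_1 = ker d times that of P_V on the boundaries B_0 = d C_1,
   while det P_V = det (P_V on B_0) * det (P_V on C_0 / B_0).  For a connected
   graph the cochains vanishing on B_0 are the constants, which P_V fixes, so the
   last factor is 1.  As det P_E = sign |P_E| * prod_e eps(e) and det P_V = sign P_V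
   are signs, so is det [P_E, H_1], and Theta_K = Theta_S follows. *)

Section OrdinalTransport.
Variable T : finType.

Definition ord_perm (s : {perm T}) : 'S_#|T| :=
  perm (fun i j (eq_ij : enum_rank (s (enum_val i)) = enum_rank (s (enum_val j))) =>
    enum_val_inj (perm_inj (enum_rank_inj eq_ij))).

Lemma ord_permE s i : ord_perm s i = enum_rank (s (enum_val i)).
Proof. by rewrite permE. Qed.

Lemma ord_permM s1 s2 : ord_perm (s1 * s2) = (ord_perm s1 * ord_perm s2)%g.
Proof. by apply/permP => i; rewrite permM !ord_permE enum_rankK permM. Qed.

Lemma ord_perm1 : ord_perm 1 = 1%g.
Proof. by apply/permP => i; rewrite ord_permE !perm1 enum_valK. Qed.

Lemma ord_permT x y : ord_perm (tperm x y) = tperm (enum_rank x) (enum_rank y).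
Proof.
apply/permP => i; rewrite ord_permE (inj_tperm _ _ _ (@enum_rank_inj T)).
by rewrite enum_valK.
Qed.

Lemma odd_ord_perm s : odd_perm (ord_perm s) = odd_perm s.
Proof.
have [ts -> dts] := prod_tpermP s.
pose rank2 (p : T * T) := (enum_rank p.1, enum_rank p.2).
have -> : ord_perm (\prod_(p <- ts) tperm p.1 p.2)%g =
          (\prod_(p <- map rank2 ts) tperm p.1 p.2)%g.
  elim: ts {dts} => [|p ts IH]; first by rewrite !big_nil ord_perm1.
  by rewrite /= !big_cons ord_permM IH ord_permT.
rewrite !odd_perm_prod ?size_map // all_map; apply: sub_all dts => p /=.
by rewrite /dpair /= (inj_eq (@enum_rank_inj T)).
Qed.

Lemma eq_enum_rank (x : T) (j : 'I_#|T|) : (enum_rank x == j) = (x == enum_val j).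
Proof. by rewrite -(inj_eq enum_val_inj) enum_rankK. Qed.

Lemma sum_enum_indicator (R : nzSemiRingType) (g : 'I_#|T| -> R) (x : T) :
  \sum_j (x == enum_val j)%:R * g j = g (enum_rank x).
Proof.
rewrite (bigD1 (enum_rank x)) //= enum_rankK eqxx mul1r big1 ?addr0 // => j nxj.
by rewrite -eq_enum_rank eq_sym (negbTE nxj) mul0r.
Qed.

End OrdinalTransport.

Section InvariantSubspaces.
Variable F : fieldType.

Lemma row_free_complement m k (B : 'M[F]_(k, m)) : row_free B ->
  exists s (C : 'M_(s, m)),
    [/\ (k + s = m)%N, row_free (col_mx B C), row_free C & (B :&: C)%MS = 0].
Proof.
move=> freeB; exists (\rank B^C)%MS, (row_base B^C)%MS.
have BC0 : (B :&: row_base B^C)%MS = 0.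
  apply/eqP; rewrite -submx0 -(capmx_compl B) capmxS //.
  by rewrite eq_row_base.
split=> //; last exact: row_base_free.
  by rewrite mxrank_compl -{1}(eqP freeB) subnKC // rank_leq_col.
by rewrite /row_free -addsmxE mxrank_disjoint_sum // (eq_row_base B^C%MS) (eqP freeB).
Qed.

Lemma det_block_stable m k s (A : 'M[F]_m) (B : 'M_(k, m)) (C : 'M_(s, m))
    (X : 'M_k) :
  (k + s = m)%N -> row_free (col_mx B C) -> B *m A = X *m B ->
  exists Y Z, C *m A = Y *m B + Z *m C /\ \det A = \det X * \det Z.
Proof.
move=> ksm; subst m => freeBC BA.
have unitBC : col_mx B C \in unitmx by rewrite -row_free_unit.
set N := C *m A *m invmx (col_mx B C).
have CA : C *m A = lsubmx N *m B + rsubmx N *m C.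
  by rewrite -mul_row_col hsubmxK /N -mulmxA mulVmx // mulmx1.
exists (lsubmx N), (rsubmx N); split=> //.
have : col_mx B C *m A = block_mx X 0 (lsubmx N) (rsubmx N) *m col_mx B C.
  by rewrite mul_col_mx mul_block_col mul0mx addr0 BA CA.
move/(congr1 determinant); rewrite !det_mulmx det_lblock mulrC.
by apply: mulIf; rewrite -unitfE -unitmxE.
Qed.

Lemma det_fixing_kernel m n (W : 'M[F]_(m, n)) (P : 'M_n) (Z : 'M_m) :
    row_free W -> W *m P = Z *m W ->
    (forall u : 'cV_n, W *m u = 0 -> P *m u = u) ->
  \det P = \det Z.
Proof.
move=> freeW WP Pker.
have [s [W' [msn freeWW' _ _]]] := row_free_complement freeW.
have [Y [Z' [W'P ->]]] := det_block_stable msn freeWW' WP.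
subst n; suff -> : Z' = 1%:M by rewrite det1 mulr1.
(* Z' is the action of P on the quotient by the row space of W; the columns of U
   span the kernel of W and are dual to that quotient, and P fixes them. *)
pose U := invmx (col_mx W W') *m col_mx 0 1%:M.
have WWU : col_mx W W' *m U = col_mx 0 1%:M.
  by rewrite mulKVmx // -row_free_unit.
have WU : W *m U = 0 by have := congr1 usubmx WWU; rewrite mul_col_mx !col_mxKu.
have W'U : W' *m U = 1%:M by have := congr1 dsubmx WWU; rewrite mul_col_mx !col_mxKd.
have PU : P *m U = U.
  apply/matrixP => i j.
  have PUj : col j (P *m U) = col j U.
    by rewrite colE -mulmxA -colE Pker // colE mulmxA WU mul0mx.
  by move/colP/(_ i): PUj; rewrite !mxE.
have <- : W' *m P *m U = Z'.
  by rewrite W'P mulmxDl -!mulmxA WU W'U mulmx0 add0r mulmx1.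
by rewrite -mulmxA PU W'U.
Qed.

Lemma det_chain_map m n (D : 'M[F]_(m, n)) (A : 'M_m) (P : 'M_n) :
    A *m D = D *m P -> (forall u : 'cV_n, D *m u = 0 -> P *m u = u) ->
  let B := row_base (kermx D) in
  \det A = \det (B *m A *m pinvmx B) * \det P.
Proof.
move=> AD Pker B.
have BD : B *m D = 0 by apply/sub_kermxP; rewrite eq_row_base.
have BA : B *m A = B *m A *m pinvmx B *m B.
  rewrite mulmxKpV // eq_row_base; apply/sub_kermxP.
  by rewrite -mulmxA AD mulmxA BD mul0mx.
have [s [C [ksm freeBC freeC BC0]]] := row_free_complement (row_base_free (kermx D)).
have [Y [Z [CA ->]]] := det_block_stable ksm freeBC BA.
congr (_ * _); apply/esym/(@det_fixing_kernel _ _ (C *m D)).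
- have := mxrank_mul_ker C D.
  have -> : \rank (C :&: kermx D)%MS = 0%N.
    apply/eqP; rewrite mxrank_eq0 -submx0 -BC0 capmxC capmxS //.
    by rewrite eq_row_base.
  by rewrite addn0 /row_free => ->.
- by rewrite -mulmxA -AD !mulmxA CA mulmxDl -(mulmxA Y) BD mulmx0 add0r.
- move=> u CDu; apply: Pker.
  have fullBC : row_full (col_mx B C) by rewrite /row_full (eqP freeBC) ksm.
  apply: (row_full_inj fullBC).
  by rewrite mulmx0 mul_col_mx !mulmxA BD mul0mx CDu col_mx0.
Qed.

End InvariantSubspaces.

Section MultigraphChains.
Variables (R : realFieldType) (V H E : finType).
Variables (v : H -> V) (iota : H -> H) (t : E -> H).
Variables (PV : {perm V}) (PH : {perm H}) (PE : {perm E}).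

Local Notation D := (bdry_mx v iota t R).
Local Notation A := (PE_mx t R PH PE).

Lemma PE_mxE :
  A = diag_mx (\row_i eps t PH PE (enum_val i) R) *m perm_mx (ord_perm PE).
Proof.
by rewrite mul_diag_mx; apply/matrixP => i j; rewrite !mxE ord_permE eq_enum_rank.
Qed.

Lemma det_PE_mx : \det A = (-1) ^+ odd_perm PE * \prod_e eps t PH PE e R.
Proof.
rewrite PE_mxE det_mulmx det_diag det_perm odd_ord_perm mulrC.
under eq_bigr do rewrite mxE.
by congr (_ * _); exact: (esym (big_enum_val (A := E) _)).
Qed.

Lemma sgr_prod_eps : Num.sg (\prod_e eps t PH PE e R) = \prod_e eps t PH PE e R.
Proof.
rewrite (big_morph _ (@sgrM R) (@sgr1 R)); apply: eq_bigr => e _.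
by rewrite /eps; case: ifP => _; rewrite ?sgr1 ?sgrN1.
Qed.

Hypotheses (iota_invol : involutive iota) (iota_fpf : forall h, iota h != h).
Hypotheses (PH_v : forall h, v (PH h) = PV (v h))
  (PH_iota : forall h, PH (iota h) = iota (PH h))
  (PE_induced : forall e, PH (t e) = t (PE e) \/ PH (t e) = iota (t (PE e))).

Lemma PE_mx_bdry : A *m D = D *m perm_mx (ord_perm PV).
Proof.
rewrite PE_mxE -mulmxA -row_permE mul_diag_mx.
rewrite -[ord_perm PV]invgK -col_permE.
apply/matrixP => i j; rewrite !mxE ord_permE enum_rankK.
have PVE (x : V) : (x == enum_val (((ord_perm PV)^-1)%g j)) = (PV x == enum_val j).
  rewrite -eq_enum_rank -(inj_eq (@perm_inj _ (ord_perm PV))) permKV.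
  by rewrite ord_permE enum_rankK eq_enum_rank.
rewrite !PVE -!PH_v PH_iota /eps.
case: (PE_induced (enum_val i)) => ->; first by rewrite eqxx mul1r.
by rewrite (negbTE (iota_fpf _)) iota_invol mulN1r opprB.
Qed.

Hypotheses
  (t_orient : bijective (fun p : E * bool => if p.2 then t p.1 else iota (t p.1)))
  (G_conn : mg_connected v iota).

Lemma bdry_kernel_const (u : 'cV[R]_#|V|) : D *m u = 0 -> forall i j, u i 0 = u j 0.
Proof.
move=> Du; pose f x := u (enum_rank x) 0.
have f_edge e : f (v (iota (t e))) = f (v (t e)).
  have /eqP := congr1 (fun w : 'cV_#|E| => w (enum_rank e) 0) Du.
  rewrite !mxE; under eq_bigr do rewrite !mxE enum_rankK mulrBl.
  by rewrite sumrB !sum_enum_indicator subr_eq0 => /eqP.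
have f_half h : f (v (iota h)) = f (v h).
  have [g _ gK] := t_orient; have := gK h.
  by case: (g h) => e [] /= <-; rewrite ?iota_invol f_edge.
have f_conn x y : f x = f y.
  have /connectP [p xp ->] := G_conn x y.
  elim: p x xp => //= z p IH x /andP [/existsP [h /andP [/eqP <- /eqP <-]] zp].
  by rewrite -f_half IH.
by move=> i j; rewrite -(enum_valK i) -(enum_valK j); exact: f_conn.
Qed.

Lemma PV_fixes_bdry_kernel (u : 'cV[R]_#|V|) :
  D *m u = 0 -> perm_mx (ord_perm PV) *m u = u.
Proof.
move/bdry_kernel_const => uconst.
by rewrite -row_permE; apply/matrixP => i j; rewrite ord1 mxE; exact: uconst.
Qed.

End MultigraphChains.

Theorem mainTheorem1 (R : realFieldType) (V H E : finType)
  (v : H -> V) (iota : H -> H) (t : E -> H)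
  (iota_invol : involutive iota)
  (iota_fpf : forall h : H, iota h != h)
  (t_orient : bijective (fun p : E * bool => if p.2 then t p.1 else iota (t p.1)))
  (G_conn : mg_connected v iota)
  (PV : {perm V}) (PH : {perm H}) (PE : {perm E})
  (PH_v : forall h : H, v (PH h) = PV (v h))
  (PH_iota : forall h : H, PH (iota h) = iota (PH h))
  (PE_induced : forall e : E, PH (t e) = t (PE e) \/ PH (t e) = iota (t (PE e))) :
  Theta_K v iota t R PH PE = Theta_S t R PV PH PE.
Proof.
have := det_chain_map (PE_mx_bdry R iota_invol iota_fpf PH_v PH_iota PE_induced)
  (PV_fixes_bdry_kernel PV iota_invol t_orient G_conn).
rewrite det_PE_mx det_perm odd_ord_perm => detA.
rewrite /Theta_K /Theta_S /perm_sign.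
set sE := (-1) ^+ _; set sV := (-1) ^+ _; set p := \prod_e _.
have -> : det_PE_H1 v iota t R PH PE = sE * p * sV.
  by rewrite detA -mulrA -expr2 sqrr_sign mulr1.
have sg_sign b : Num.sg ((-1) ^+ b : R) = (-1) ^+ b by rewrite sgrX sgrN1.
by rewrite !sgrM sgr_prod_eps !sg_sign mulrA signrMK mulrC.
Qed.
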